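(* Let $L$ be a finite lattice with exactly two coatoms and $U$ a finite lattice with exactly two atoms. Then any vertical 2-sum $L +_2 U$ of $L$ and $U$ is a lattice.
   Context: Let $L' = L \setminus \{\top_L\}$ and $U' = U \setminus \{\bot_U\}$, where $\top_L$ is the top of $L$ and $\bot_U$ the bottom of $U$. A vertical 2-sum $L +_2 U$ is the poset obtained from the disjoint union of $L'$ and $U'$ by identifying the two coatoms of $L$ with the two atoms of $U$ via some bijection; the order is the one generated by the orders of $L'$ and $U'$, i.e. $x \le y$ iff $x,y \in L'$ and $x \le_L y$, or $x,y \in U'$ and $x \le_U y$, or $x \in L'$, $y \in U'$ and there is an identified element $c$ with $x \le_L c$ and $c \le_U y$. *)

From mathcomp Require Import all_boot all_order.
Set Implicit Arguments. Unset Strict Implicit. Unset Printing Implicit Defensive.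
Import Order.Theory.
Local Open Scope order_scope.

Definition coatom (d : Order.disp_t) (L : finTBLatticeType d) (c : L) : bool :=
  (c < \top) && [forall x : L, ~~ ((c < x) && (x < \top))].

Definition atom (d : Order.disp_t) (U : finTBLatticeType d) (a : U) : bool :=
  (\bot < a) && [forall x : U, ~~ ((\bot < x) && (x < a))].

Section TwoSum.
Variables (d1 d2 : Order.disp_t) (L : finTBLatticeType d1) (U : finTBLatticeType d2).
Variable f : L -> U. (* the identification coatoms of L -> atoms of U *)

(* Carrier of L +_2 U, inside L + U:  inl x for x in L' = L \ {top}
   (coatoms c of L stand for the identified element c = f c),
   inr y for y in U' = U \ {bot} that is not an atom (atoms are already
   represented by the coatoms of L they are identified with). *)
Definition vs_carrier (z : L + U) : bool :=
  match z with
  | inl x => x != \top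
  | inr y => (y != \bot) && ~~ atom y
  end.

Definition vs_inL (z : L + U) : option L :=
  match z with inl x => Some x | inr _ => None end.

Definition vs_inU (z : L + U) : option U :=
  match z with
  | inl x => if coatom x then Some (f x) else None
  | inr y => Some y
  end.

(* the order generated by the orders of L' and U' *)
Definition vs_le (z w : L + U) : Prop :=
  (exists x y, vs_inL z = Some x /\ vs_inL w = Some y /\ x <= y)
  \/ (exists x y, vs_inU z = Some x /\ vs_inU w = Some y /\ x <= y)
  \/ (exists x y, vs_inL z = Some x /\ vs_inU w = Some y /\
        exists c : L, coatom c /\ x <= c /\ f c <= y).
End TwoSum.

Definition is_lattice (T : Type) (A : T -> bool) (le : T -> T -> Prop) : Prop :=
  (forall x, A x -> le x x)
  /\ (forall x y, A x -> A y -> le x y -> le y x -> x = y)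
  /\ (forall x y z, A x -> A y -> A z -> le x y -> le y z -> le x z)
  /\ (forall x y, A x -> A y ->
        exists j, A j /\ le x j /\ le y j /\
          forall u, A u -> le x u -> le y u -> le j u)
  /\ (forall x y, A x -> A y ->
        exists m, A m /\ le m x /\ le m y /\
          forall u, A u -> le u x -> le u y -> le u m).

(* Every x <> top in L lies below one of the two coatoms c1, c2, and every
   y <> bot in U lies above one of the two atoms a1 = f c1, a2 = f c2.  Hence on
   L' + U'' (U'' = U minus bot and the atoms) the generated order is: x <= y iff
   x <= c_i and a_i <= y for some i.  Binary joins exist by cases: in L' it is
   the join of L unless that is top, in which case it is a1 \/ a2 (this is where
   having exactly two coatoms matters); for x in L' and y in U'' it is y or
   y \/ a_i; in U'' it is the join of U, as U'' is up-closed.  Bottom of L is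
   the least element, and a finite poset with a least element and binary joins
   is a lattice: the meet of two elements is the join of their lower bounds. *)

From mathcomp Require Import all_boot all_order.
Set Implicit Arguments. Unset Strict Implicit. Unset Printing Implicit Defensive.
Import Order.Theory.
Local Open Scope order_scope.

Lemma card_down_lt d (T : finPOrderType d) (x y : T) :
  x < y -> (#|[pred z | (z <= x)%O]| < #|[pred z | (z <= y)%O]|)%N.
Proof.
move=> xy; apply: proper_card; apply/properP; split.
  by apply/subsetP => z; rewrite !inE => /le_trans; apply; apply: ltW.
by exists y; rewrite !inE ?lexx // lt_geF.
Qed.

Lemma exists_maximal d (T : finPOrderType d) (P : pred T) (x : T) : P x ->
  exists2 m, P m /\ x <= m & forall z, P z -> ~~ (m < z).
Proof.
move=> Px.
case: (@arg_maxnP _ x (fun y => P y && (x <= y)) (fun y => #|[pred z | z <= y]|)).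
  by rewrite Px lexx.
move=> m /andP[Pm xm] maxm.
exists m => // z Pz; apply/negP => mz.
have := maxm z; rewrite Pz (le_trans xm (ltW mz)) => /(_ isT).
by rewrite /= leqNgt card_down_lt.
Qed.

Lemma below_coatom d (L : finTBLatticeType d) (x : L) : x != \top ->
  exists2 c, coatom c & x <= c.
Proof.
move=> x1; have [|c [c1 xc] maxc] := @exists_maximal _ _ (fun y => y < \top) x.
  by rewrite lt_neqAle x1 lex1.
exists c => //; apply/andP; split=> //; apply/forallP => z.
by apply/negP => /andP[cz /maxc]; rewrite cz.
Qed.

Lemma above_atom d (U : finTBLatticeType d) (y : U) : y != \bot ->
  exists2 a, atom a & a <= y.
Proof.
move=> y0; have [|a [a0 ay] mina] := @exists_maximal _ U^d (fun z : U => \bot < z) y.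
  by rewrite lt_neqAle eq_sym y0 le0x.
exists a => //; apply/andP; split=> //; apply/forallP => z.
by apply/negP => /andP[/mina]; rewrite ltEdual => /negbTE->.
Qed.

Lemma coatom_neq1 d (L : finTBLatticeType d) (c : L) : coatom c -> c != \top.
Proof. by case/andP; rewrite lt_neqAle => /andP[]. Qed.

Lemma atom_neq0 d (U : finTBLatticeType d) (a : U) : atom a -> a != \bot.
Proof. by case/andP; rewrite lt_neqAle eq_sym => /andP[]. Qed.

Lemma le_atom_eq d (U : finTBLatticeType d) (a y : U) :
  atom a -> y != \bot -> y <= a -> y = a.
Proof.
case/andP=> _ /forallP/(_ y) + y0 ya; rewrite !lt_neqAle eq_sym y0 le0x ya /=.
by rewrite andbT negbK => /eqP.
Qed.

Definition is_lub (T : Type) (A : pred T) (le : rel T) (x y j : T) : Prop :=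
  A j /\ le x j /\ le y j /\ forall u, A u -> le x u -> le y u -> le j u.

Lemma is_lubC (T : Type) (A : pred T) (le : rel T) (x y j : T) :
  is_lub A le x y j -> is_lub A le y x j.
Proof.
by case=> Aj [xj [yj minj]]; split=> //; split=> //; split=> // u Au yu xu; apply: minj.
Qed.

Lemma le_is_lub (T : Type) (A : pred T) (le : rel T) (x y : T) :
  A y -> le y y -> le x y -> is_lub A le x y y.
Proof. by move=> Ay yy xy; split=> //; split=> //; split=> // u _ _. Qed.

Section MeetsFromJoins.
Variables (T : finType) (A : pred T) (le : rel T) (bot : T).
Hypothesis le_trans_in :
  forall x y z, A x -> A y -> A z -> le x y -> le y z -> le x z.
Hypotheses (A_bot : A bot) (le_bot : forall x, A x -> le bot x).
Hypothesis has_lub : forall x y, A x -> A y -> exists j, is_lub A le x y j.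

Lemma seq_has_lub (s : seq T) : all A s -> exists j, A j /\
  {in s, forall v, le v j} /\ forall u, A u -> {in s, forall v, le v u} -> le j u.
Proof.
elim: s => [_ | v s IHs /andP[Av sA]].
  by exists bot; split=> //; split=> // u Au _; apply: le_bot.
have [j [Aj [sj minj]]] := IHs sA.
have [k [Ak [vk [jk mink]]]] := has_lub Av Aj.
exists k; split=> //; split=> [w | u Au vsu].
  rewrite inE => /predU1P[-> // | ws].
  by apply: le_trans_in (sj w ws) jk => //; apply: (allP sA).
apply: mink => //; first by apply: vsu; rewrite mem_head.
by apply: minj => // w ws; apply: vsu; rewrite inE ws orbT.
Qed.

Lemma has_glb x y : A x -> A y -> exists m, A m /\ le m x /\ le m y /\
  forall u, A u -> le u x -> le u y -> le u m.
Proof.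
move=> Ax Ay; pose lbs := [seq u <- enum T | [&& A u, le u x & le u y]].
have [|m [Am [lbs_m minm]]] := @seq_has_lub lbs.
  by apply/allP => u; rewrite mem_filter => /andP[/and3P[]].
exists m; split=> //; split; [|split].
- by apply: minm => // u; rewrite mem_filter => /andP[/and3P[]].
- by apply: minm => // u; rewrite mem_filter => /andP[/and3P[]].
- by move=> u Au ux uy; apply: lbs_m; rewrite mem_filter Au ux uy mem_enum.
Qed.

Lemma lattice_of_joins :
  (forall x, A x -> le x x) ->
  (forall x y, A x -> A y -> le x y -> le y x -> x = y) ->
  is_lattice A le.
Proof. by move=> le_refl le_anti; do 4?split=> //; apply: has_glb. Qed.

End MeetsFromJoins.

Lemma is_lattice_equiv (T : Type) (A : T -> bool) (le1 le2 : T -> T -> Prop) :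
  (forall x y, A x -> A y -> le1 x y <-> le2 x y) ->
  is_lattice A le2 -> is_lattice A le1.
Proof.
move=> E [refl [anti [trans [lub glb]]]]; split; [|split; [|split; [|split]]].
- by move=> x Ax; apply/E/refl.
- by move=> x y Ax Ay /E-/(_ Ax Ay) xy /E-/(_ Ay Ax) yx; apply: anti.
- move=> x y z Ax Ay Az /E-/(_ Ax Ay) xy /E-/(_ Ay Az) yz.
  by apply/E => //; apply: trans yz.
- move=> x y Ax Ay; have [j [Aj [xj [yj minj]]]] := lub x y Ax Ay.
  exists j; do 3?split; [by [] | exact/E | exact/E |].
  by move=> u Au /E-/(_ Ax Au) xu /E-/(_ Ay Au) yu; apply/E/minj.
- move=> x y Ax Ay; have [m [Am [mx [my minm]]]] := glb x y Ax Ay.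
  exists m; do 3?split; [by [] | exact/E | exact/E |].
  by move=> u Au /E-/(_ Au Ax) ux /E-/(_ Au Ay) uy; apply/E/minm.
Qed.

Section VerticalTwoSum.
Variables (d1 d2 : Order.disp_t) (L : finTBLatticeType d1) (U : finTBLatticeType d2).
Variables (f : L -> U) (c1 c2 : L).
Hypothesis coatomE : forall c : L, coatom c = (c == c1) || (c == c2).
Hypothesis atomE : forall a : U, atom a = (a == f c1) || (a == f c2).
Hypothesis f_c12 : f c1 != f c2.

Local Notation a1 := (f c1).
Local Notation a2 := (f c2).
Local Notation carrier := (vs_carrier (L := L) (U := U)).

Lemma coatom_c1 : coatom c1. Proof. by rewrite coatomE eqxx. Qed.
Lemma coatom_c2 : coatom c2. Proof. by rewrite coatomE eqxx orbT. Qed.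

Lemma atom_f c : coatom c -> atom (f c).
Proof. by rewrite coatomE atomE => /orP[]/eqP->; rewrite eqxx ?orbT. Qed.

Lemma atom_a1 : atom a1. Proof. exact: atom_f coatom_c1. Qed.
Lemma atom_a2 : atom a2. Proof. exact: atom_f coatom_c2. Qed.

Lemma below_c12 (x : L) : x != \top -> (x <= c1) || (x <= c2).
Proof.
by case/below_coatom => c; rewrite coatomE => /orP[]/eqP-> ->; rewrite ?orbT.
Qed.

Lemma above_a12 (y : U) : y != \bot -> (a1 <= y) || (a2 <= y).
Proof.
by case/above_atom => a; rewrite atomE => /orP[]/eqP-> ->; rewrite ?orbT.
Qed.

Lemma le_atom_images c c' : coatom c -> coatom c' -> f c <= f c' -> c = c'.
Proof.
move=> cc cc' /(le_atom_eq (atom_f cc') (atom_neq0 (atom_f cc))).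
by move: cc cc'; rewrite !coatomE => /orP[]/eqP-> /orP[]/eqP-> // e;
  move: f_c12; rewrite e eqxx.
Qed.

Lemma vs_le_inlE (x x' : L) : vs_le f (inl x) (inl x') <-> x <= x'.
Proof.
split=> [|xx']; last by left; exists x, x'.
case=> [[_ [_ [[<-] [[<-] //]]]] | [[a [b [ea [eb ab]]]] |
        [_ [b [[<-] [eb [c [cc [xc cb]]]]]]]]].
  move: ea eb ab => /=; case: ifP => // cx [<-]; case: ifP => // cx' [<-].
  by move/(le_atom_images cx cx') ->.
by move: eb cb => /=; case: ifP => // cx' [<-] /(le_atom_images cc cx') <-.
Qed.

Lemma vs_le_inl_inrE (x : L) (y : U) :
  vs_le f (inl x) (inr y) <-> (x <= c1) && (a1 <= y) || (x <= c2) && (a2 <= y).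
Proof.
split=> [|/orP[]/andP[xc ay]]; last 2 first.
- by right; right; exists x, y; do 2!split=> //; exists c1; rewrite coatom_c1.
- by right; right; exists x, y; do 2!split=> //; exists c2; rewrite coatom_c2.
case=> [[_ [_ [_ [//]]]] | [[a [b [ea [[<-] ab]]]] |
        [_ [b [[<-] [[<-] [c [cc [xc cb]]]]]]]]].
  move: ea ab => /=; case: ifP => // cx [<-].
  by move: cx; rewrite coatomE => /orP[]/eqP-> ->; rewrite lexx ?orbT.
by move: xc cb; rewrite coatomE in cc; case/orP: cc => /eqP-> -> ->; rewrite ?orbT.
Qed.

Lemma vs_le_inrE (y y' : U) : vs_le f (inr y) (inr y') <-> y <= y'.
Proof.
split=> [|yy']; last by right; left; exists y, y'.
by case=> [[_ [_ [//]]] | [[a [b [[<-] [[<-] //]]]] | [_ [_ [//]]]]].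
Qed.

Lemma vs_nle_inr_inl (y : U) (x : L) : carrier (inr y) -> ~ vs_le f (inr y) (inl x).
Proof.
case/andP=> y0 /negP ny; case=> [[_ [_ [//]]] | [[a [b [[<-] [eb yb]]]] | [_ [_ [//]]]]].
move: eb yb => /=; case: ifP => // cx [<-] yfx; apply: ny.
by rewrite (le_atom_eq (atom_f cx) y0 yfx) atom_f.
Qed.

Definition vs_leb (z w : L + U) : bool :=
  match z, w with
  | inl x, inl x' => x <= x'
  | inr y, inr y' => y <= y'
  | inl x, inr y => (x <= c1) && (a1 <= y) || (x <= c2) && (a2 <= y)
  | inr _, inl _ => false
  end.

Lemma vs_leE (z w : L + U) : carrier z -> carrier w -> vs_le f z w <-> vs_leb z w.
Proof.
case: z w => [x|y] [x'|y'] z_mem _.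
- exact: vs_le_inlE.
- exact: vs_le_inl_inrE.
- by split=> // /(vs_nle_inr_inl z_mem).
- exact: vs_le_inrE.
Qed.

Lemma vs_leb_refl z : vs_leb z z.
Proof. by case: z => /= *; rewrite lexx. Qed.

Lemma vs_leb_anti z w : vs_leb z w -> vs_leb w z -> z = w.
Proof.
by case: z w => [x|y] [x'|y'] //= zw wz; f_equal; apply/le_anti; rewrite zw wz.
Qed.

Lemma vs_leb_trans z w v : vs_leb z w -> vs_leb w v -> vs_leb z v.
Proof.
case: z w v => [x|y] [x'|y'] [x''|y''] //=; try exact: le_trans.
  by move=> xx' /orP[]/andP[x'c ay]; rewrite (le_trans xx' x'c) ay ?orbT.
by move=> /orP[]/andP[xc ay] yy'; rewrite xc (le_trans ay yy') ?orbT.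
Qed.

Lemma vs_carrier_inr (y : U) : carrier (inr y) = [&& y != \bot, y != a1 & y != a2].
Proof. by rewrite /= atomE negb_or. Qed.

Lemma vs_carrier_bot : carrier (inl \bot).
Proof.
by apply: contraNneq (coatom_neq1 coatom_c1) => e; rewrite -le1x -e le0x.
Qed.

Lemma vs_leb_bot z : carrier z -> vs_leb (inl \bot) z.
Proof. by case: z => [x|y] /=; rewrite ?le0x // => /andP[/above_a12]. Qed.

Lemma vs_carrier_inr_le (y w : U) : y <= w -> carrier (inr y) -> carrier (inr w).
Proof.
move=> yw /andP[y0 ny]; apply/andP; split.
  by apply: contraNneq y0 => w0; rewrite -lex0 -w0.
by apply: contra ny => aw; rewrite (le_atom_eq aw y0 yw).
Qed.

Lemma vs_carrier_a12 : carrier (inr (a1 `|` a2)).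
Proof.
rewrite vs_carrier_inr; apply/and3P; split.
- by apply: contraNneq (atom_neq0 atom_a1) => e; rewrite -lex0 -e leUl.
- apply: contra_neq f_c12 => e; apply/esym/(le_atom_eq atom_a1 (atom_neq0 atom_a2)).
  by rewrite -e leUr.
- apply: contra_neq f_c12 => e; apply: (le_atom_eq atom_a2 (atom_neq0 atom_a1)).
  by rewrite -e leUl.
Qed.

Local Notation vs_lub := (is_lub carrier vs_leb).

Lemma vs_lub_inl (x y : L) : x != \top -> y != \top ->
  exists j, vs_lub (inl x) (inl y) j.
Proof.
move=> x1 y1; have [xy1 | xy1] := eqVneq (x `|` y) \top.
  exists (inr (a1 `|` a2)); split; first exact: vs_carrier_a12.
  split; first by case/orP: (below_c12 x1) => /= ->; rewrite ?leUl ?leUr ?orbT.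
  split; first by case/orP: (below_c12 y1) => /= ->; rewrite ?leUl ?leUr ?orbT.
  case=> [u | u] u_mem /=.
    by move=> xu yu; move: u_mem; rewrite /= -le1x -xy1 leUx xu yu.
  case/orP=> /andP[xc a_u]; case/orP=> /andP[yc b_u]; rewrite ?leUx ?a_u ?b_u //.
    by move: (coatom_neq1 coatom_c1); rewrite -le1x -xy1 leUx xc yc.
  by move: (coatom_neq1 coatom_c2); rewrite -le1x -xy1 leUx xc yc.
exists (inl (x `|` y)); split=> //; split; [exact: leUl | split; [exact: leUr |]].
case=> [u | u] _ /=; first by move=> xu yu; rewrite leUx xu yu.
case/orP=> /andP[xc a_u]; case/orP=> /andP[yc b_u];
  try by rewrite !leUx ?xc ?yc ?a_u ?b_u ?orbT.
all: by case/orP: (below_c12 xy1) => ->; rewrite ?a_u ?b_u ?orbT.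
Qed.

Lemma vs_lub_inl_inr (x : L) (y : U) : x != \top -> carrier (inr y) ->
  exists j, vs_lub (inl x) (inr y) j.
Proof.
move=> x1 y_mem; have y0 : y != \bot by case/andP: y_mem.
have [xy | nxy] := boolP (vs_leb (inl x) (inr y)).
  by exists (inr y); apply: le_is_lub; rewrite //= lexx.
have [xc1 | nxc1] := boolP (x <= c1).
  exists (inr (y `|` a1)); split; first exact: vs_carrier_inr_le (leUl _ _) y_mem.
  rewrite /= xc1 leUr leUl; split=> //; split=> //.
  case=> [u | u] _ //= xu yu //; rewrite leUx yu /=.
  case/orP: xu => // /andP[xc2 _].
  by case/orP: (above_a12 y0) => ay; move: nxy; rewrite /= xc1 xc2 ay ?orbT.
have xc2 : x <= c2 by move: (below_c12 x1); rewrite (negbTE nxc1).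
exists (inr (y `|` a2)); split; first exact: vs_carrier_inr_le (leUl _ _) y_mem.
rewrite /= xc2 leUr leUl orbT; split=> //; split=> //.
case=> [u | u] _ //= xu yu //; rewrite leUx yu /=.
by case/orP: xu => // /andP[xc _]; rewrite xc in nxc1.
Qed.

Lemma vs_lub_inr (y y' : U) : carrier (inr y) ->
  vs_lub (inr y) (inr y') (inr (y `|` y')).
Proof.
move=> y_mem; split; first exact: vs_carrier_inr_le (leUl _ _) y_mem.
rewrite /= leUl leUr; split=> //; split=> //.
by case=> [u | u] _ //= yu y'u; rewrite leUx yu y'u.
Qed.

Lemma vs_has_lub z w : carrier z -> carrier w -> exists j, vs_lub z w j.
Proof.
case: z w => [x|y] [x'|y'] z_mem w_mem.
- exact: vs_lub_inl.
- exact: vs_lub_inl_inr.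
- by have [j lub_j] := vs_lub_inl_inr w_mem z_mem; exists j; apply: is_lubC.
- by exists (inr (y `|` y')); apply: vs_lub_inr.
Qed.

Lemma vs_leb_is_lattice : is_lattice carrier vs_leb.
Proof.
apply: (@lattice_of_joins _ _ _ (inl \bot)).
- by move=> z w v _ _ _; apply: vs_leb_trans.
- exact: vs_carrier_bot.
- exact: vs_leb_bot.
- exact: vs_has_lub.
- by move=> z _; apply: vs_leb_refl.
- by move=> z w _ _; apply: vs_leb_anti.
Qed.

Lemma vs_is_lattice : is_lattice carrier (vs_le f).
Proof. exact: is_lattice_equiv vs_leE vs_leb_is_lattice. Qed.

End VerticalTwoSum.

Theorem lemma3p3 (d1 d2 : Order.disp_t)
  (L : finTBLatticeType d1) (U : finTBLatticeType d2) (f : L -> U) :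
  #|[pred c : L | coatom c]| = 2 ->
  #|[pred a : U | atom a]| = 2 ->
  (forall c : L, coatom c -> atom (f c)) ->
  {in [pred c : L | coatom c] &, injective f} ->
  (forall a : U, atom a -> exists2 c : L, coatom c & f c = a) ->
  is_lattice (vs_carrier (L := L) (U := U)) (vs_le f).
Proof.
(* The number of atoms is forced by the other hypotheses. *)
move=> card_coatoms _ atom_f_coatom f_inj atom_im.
have /cards2P[c1 [c2 [c12 coatoms_c12]]] : #|[set c : L | coatom c]| == 2.
  by rewrite cardsE card_coatoms.
have coatomE c : coatom c = (c == c1) || (c == c2).
  by rewrite -in_set2 -coatoms_c12 inE.
have coatom_c12 : coatom c1 /\ coatom c2 by rewrite !coatomE !eqxx orbT.
have f_c12 : f c1 != f c2.
  by apply: contra_neq c12 => /f_inj; apply; rewrite inE; case: coatom_c12.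
apply: (vs_is_lattice coatomE _ f_c12) => a; apply/idP/orP.
  by case/atom_im => c; rewrite coatomE => /orP[]/eqP-> <-; [left | right].
by case=> /eqP->; apply: atom_f_coatom; case: coatom_c12.
Qed.
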